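(* Let $\mathbb{Q}\subset K$ be a totally imaginary Galois extension of finite degree. Then $\overline{N}_{K/\mathbb{Q}}=\mathbb{Q}^+$.
   Context: $\overline{N}_{K/\mathbb{Q}}$ is the set of all finite sums $\sum_iN_{K/\mathbb{Q}}(a_i)$ with $a_i\in K$ and $N_{K/\mathbb{Q}}$ the field norm; $\mathbb{Q}^+$ denotes the non-negative rationals. A number field is totally imaginary if none of its embeddings into $\mathbb{C}$ lands in $\mathbb{R}$. *)

From HB Require Import structures.
From mathcomp Require Import all_boot all_order all_algebra all_field.
Set Implicit Arguments. Unset Strict Implicit. Unset Printing Implicit Defensive.
Import GRing.Theory Num.Theory.
Local Open Scope ring_scope.

(* Every embedding of a number field into C
   lands in the algebraic numbers algC, so we quantify over ring morphisms
   K -> algC. *)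
Definition totally_imaginary (K : fieldExtType rat) : Prop :=
  forall f : {rmorphism K -> algC}, exists x : K, f x \isn't Num.real.

Definition sums_of_norms (K : splittingFieldType rat) : K -> Prop :=
  fun x => exists s : seq K, x = \sum_(a <- s) galNorm 1%VS fullv a.

From HB Require Import structures.
From mathcomp Require Import all_boot all_order all_algebra all_field.
From mathcomp Require Import fingroup ring.
Import GRing.Theory Num.Theory.
Local Open Scope ring_scope.

(* Fix an embedding f : K -> algC (which exists for
   every number field, by the primitive element theorem).  Since K/Q is
   normal, complex conjugation restricts through f to an automorphism t of K,
   and t <> 1 because K is totally imaginary.  The Galois group then splits
   into the pairs {s, s * t}, whose factors in f (N(a)) = \prod_s f (s a) are
   complex conjugate, so f (N(a)) >= 0: every norm, hence every sum of norms,
   is a nonnegative rational.  Conversely a rational r >= 0 can be written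
   m * (1/d)^n with n = #Gal(K/Q), and (1/d)^n is the norm of 1/d, so r is a
   sum of m copies of that norm. *)

Section RingMorphismFactorization.

Variables (A B C : nzRingType) (g : {rmorphism A -> B}) (h : {rmorphism A -> C}).
Hypothesis g_surj : forall b : B, exists a : A, g a == b.
Hypothesis ker_g_sub_ker_h : forall a : A, g a = 0 -> h a = 0.

Definition factor_map (b : B) : C := h (xchoose (g_surj b)).

Lemma factor_mapE (a : A) : factor_map (g a) = h a.
Proof.
have /eqP g_lift := xchooseP (g_surj (g a)).
apply/eqP; rewrite -subr_eq0 -rmorphB; apply/eqP/ker_g_sub_ker_h.
by rewrite rmorphB g_lift subrr.
Qed.

Fact factor_map_is_zmod_morphism : zmod_morphism factor_map.
Proof.
move=> x y; have [a /eqP <-] := g_surj x; have [b /eqP <-] := g_surj y.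
by rewrite -rmorphB !factor_mapE rmorphB.
Qed.

Fact factor_map_is_monoid_morphism : monoid_morphism factor_map.
Proof.
split=> [|x y]; first by rewrite -(rmorph1 g) factor_mapE rmorph1.
have [a /eqP <-] := g_surj x; have [b /eqP <-] := g_surj y.
by rewrite -rmorphM !factor_mapE rmorphM.
Qed.

HB.instance Definition _ :=
  GRing.isZmodMorphism.Build B C factor_map factor_map_is_zmod_morphism.
HB.instance Definition _ :=
  GRing.isMonoidMorphism.Build B C factor_map factor_map_is_monoid_morphism.

Lemma rmorphism_factorization :
  exists f : {rmorphism B -> C}, forall a, f (g a) = h a.
Proof. by exists factor_map; apply: factor_mapE. Qed.

End RingMorphismFactorization.

(* Every number field embeds in algC: write K = Q(z), send z to a complex
   root w of its minimal polynomial, i.e. factor evaluation at w through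
   evaluation at z. *)
Lemma num_field_embedding (K : fieldExtType rat) : inhabited {rmorphism K -> algC}.
Proof.
have char0 : has_pchar0 K by move=> p; rewrite pchar_lalg pchar_num.
have sepK : separable 1 {:K} by apply/separableP=> y _; apply: pcharf0_separable.
have generated := eq_adjoin_separable_generator sepK (sub1v _).
set z := separable_generator _ _ in generated.
have /polyOver1P[p minPolyE] := minPolyOver 1 z.
have [w pw0] : exists w : algC, root (map_poly ratr p) w.
  apply/closed_rootP.
  by rewrite size_map_poly -(size_map_poly (in_alg K)) -minPolyE size_minPoly.
pose h : {rmorphism {poly rat} -> algC} := horner_morph (fun c => mulrC w (ratr c)).
have [f _] : exists f : {rmorphism K -> algC}, forall q, f (fieldExt_horner z q) = h q;
  last by exists.
apply: rmorphism_factorization.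
- move=> x; have : x \in <<1; z>>%VS by rewrite -generated memvf.
  by case/Fadjoin1_polyP=> q ->; exists q.
- move=> q qz0.
  have : minPoly 1 z %| map_poly (in_alg K) q.
    by apply: minPoly_dvdp; [apply: alg_polyOver | apply/rootP].
  rewrite minPolyE dvdp_map => /dvdpP[r ->].
  by rewrite rmorphM /= /h /horner_morph (rootP pw0) mulr0.
Qed.

Lemma lrmorphism_in_gal {F : fieldType} {L : splittingFieldType F}
    (phi : {lrmorphism L -> L}) :
  exists2 s : gal_of {:L}, s \in 'Gal({:L} / 1)%g & forall x, s x = phi x.
Proof.
have phi_aut : kAut 1 {:L} (linfun phi).
  rewrite kAutfE; apply/kHom_monoid_morphism.
  by split=> [|x y]; rewrite !lfunE /= ?rmorph1 ?rmorphM.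
have [s s_gal phi_s] := kAut_to_gal phi_aut.
by exists s => // x; rewrite -phi_s ?memvf ?lfunE.
Qed.

Lemma aut_algC_in_gal {K : splittingFieldType rat} (f : {rmorphism K -> algC})
    (nu : {rmorphism algC -> algC}) :
  exists2 s : gal_of {:K}, s \in 'Gal({:K} / 1)%g & forall x, f (s x) = nu (f x).
Proof.
have [phi f_phi] := restrict_aut_to_normal_num_field f nu.
have [s s_gal s_phi] := lrmorphism_in_gal phi.
by exists s => // x; rewrite s_phi f_phi.
Qed.

(* If a fixed-point-free involution i of A exchanges the values of F with
   their conjugates, then \prod_(x in A) F x = P * P^* >= 0, where P is the
   product over one element of each pair {x, i x}. *)
Lemma prod_conj_pairs_ge0 (C : numClosedFieldType) (T : finType) (A : {pred T})
    (i : T -> T) (F : T -> C) :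
    (forall x, (i x \in A) = (x \in A)) -> involutive i -> (forall x, i x != x) ->
    (forall x, F (i x) = (F x)^*) ->
  0 <= \prod_(x in A) F x.
Proof.
move=> iA iK i_neq Fi; pose rk := @enum_rank T.
have rank_swap x : (rk x < rk (i x))%N = ~~ (rk (i x) < rk x)%N.
  rewrite ltnNge leq_eqVlt -[_ == _]/(rk (i x) == rk x) (inj_eq enum_rank_inj).
  by rewrite (negbTE (i_neq x)).
rewrite (bigID (fun x => rk x < rk (i x))%N) /=.
rewrite [X in _ * X](reindex_inj (inv_inj iK)) /=.
rewrite [X in _ * X](eq_bigl (fun x => (x \in A) && (rk x < rk (i x))%N)) => [|x];
  last by rewrite iA iK rank_swap.
rewrite [X in _ * X](eq_bigr (fun x => (F x)^*)) => [|x _]; last exact: Fi.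
by rewrite -rmorph_prod mul_conjC_ge0.
Qed.

Lemma galNorm_embedding_ge0 {K : splittingFieldType rat} {f : {rmorphism K -> algC}}
    {t : gal_of {:K}} :
    t \in 'Gal({:K} / 1)%g -> (forall x, f (t x) = (f x)^*) -> t != 1%g ->
  forall a, 0 <= f (galNorm 1 {:K} a).
Proof.
move=> t_gal f_t t_neq1 a.
have tK : (t * t = 1)%g.
  apply/eqP/gal_eqP=> y _; rewrite galM ?memvf // gal_id.
  by apply: (fmorph_inj f); rewrite !f_t conjCK.
rewrite rmorph_prod.
apply: (@prod_conj_pairs_ge0 _ _ 'Gal({:K} / 1)%g (fun s => s * t)%g (fun s => f (s a))).
- by move=> s; rewrite groupMr.
- by move=> s; rewrite -mulgA tK mulg1.
- move=> s; apply: contra t_neq1 => /eqP st_s.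
  by rewrite -(mulKg s t) st_s mulVg.
- by move=> s; rewrite galM ?memvf // f_t.
Qed.

(* In a totally imaginary normal number field, conjugation is induced by a
   nontrivial Galois automorphism, so every norm is a nonnegative rational. *)
Lemma galNorm_nonneg_rat {K : splittingFieldType rat}
    (Hgal : galois 1 {:K}) (Himag : totally_imaginary K) (a : K) :
  exists r : rat, 0 <= r /\ galNorm 1 {:K} a = r%:A.
Proof.
have [f] := num_field_embedding K.
have [t t_gal f_t] := aut_algC_in_gal f Num.Def.conjC.
have t_neq1 : t != 1%g.
  have [x fx_nonreal] := Himag f; apply: contra fx_nonreal => /eqP t1.
  by rewrite CrealE -f_t t1 gal_id.
have [r Nr] := vlineP _ _ (mem_galNorm Hgal (memvf a)).
exists r; split=> //; rewrite -(ler0q algC).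
have := galNorm_embedding_ge0 t_gal f_t t_neq1 a.
by rewrite Nr rmorphZ_num rmorph1 mulr1.
Qed.

Lemma galNorm_base {F : fieldType} {L : splittingFieldType F} (U V : {subfield L})
    (a : L) :
  (U <= V)%VS -> a \in U -> galNorm U V a = a ^+ #|'Gal(V / U)%g|.
Proof.
move=> sUV Ua; rewrite /galNorm -prodr_const.
by apply: eq_bigr => s s_gal; apply: fixed_gal sUV s_gal Ua.
Qed.

Lemma rat_ge0_scaled_power (r : rat) (n : nat) :
  0 <= r -> exists m d : nat, r = m%:R * (d%:R^-1) ^+ n.+1.
Proof.
move=> r_ge0; set a := `|numq r|%N; set b := `|denq r|%N.
have numE : numq r = a%:Z by rewrite /a abszE ger0_norm ?numq_ge0.
have denE : denq r = b%:Z by rewrite /b absz_denq.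
have b_neq0 : b%:R != 0 :> rat by rewrite pnatr_eq0 -lt0n -ltz_nat -denE denq_gt0.
exists (a * b ^ n)%N, b.
rewrite -[LHS]divq_num_den numE denE -!pmulrn natrM natrX exprVn exprS.
field.
by rewrite b_neq0 expf_neq0.
Qed.

Theorem mainTheorem9 (K : splittingFieldType rat)
  (Hgal : galois 1%VS (fullv : {vspace K}))
  (Himag : totally_imaginary K) :
  forall x : K, sums_of_norms x <-> exists r : rat, 0 <= r /\ x = r%:A.
Proof.
move=> x; split.
  case=> s ->; elim: s => [|a s [r [r_ge0 sum_s]]].
    by exists 0; rewrite big_nil scale0r.
  have [q [q_ge0 Nq]] := galNorm_nonneg_rat Hgal Himag a.
  by exists (q + r); rewrite big_cons sum_s Nq scalerDl addr_ge0.
case=> r [r_ge0 ->].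
have [n gal_card] : exists n, #|'Gal({:K} / 1)%g| = n.+1.
  by exists #|'Gal({:K} / 1)%g|.-1; rewrite prednK ?cardG_gt0.
have [m [d ->]] := rat_ge0_scaled_power r n r_ge0.
exists (nseq m (d%:R^-1)%:A); rewrite big_nseq iter_addr_0.
rewrite galNorm_base ?sub1v ?rpredZ ?mem1v // gal_card.
by rewrite exprZn expr1n scalerMnl mulr_natl.
Qed.
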